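(* Let $R$ be a commutative ring with identity, $C=(c_{ij})_{i,j=1}^n$ a matrix with entries in $R$, and $E$ the $n\times n$ matrix all of whose entries are $1$. Then $$\det(E-C)=\det(-C)+\sum_{\vec G}(-1)^{\#(\text{cycles of }\vec G)}\prod_{ij\in E(\vec G)}c_{ij},$$ where the sum runs over all directed graphs $\vec G$ on the vertex set $\{1,\ldots,n\}$ in which one connected component is a directed path (possibly of length $0$, i.e. an isolated vertex) and all other connected components are directed cycles (possibly of length $1$, i.e. a loop $ii$).
   Context: In a directed graph, $ij\in E(\vec G)$ denotes a directed edge from $i$ to $j$ (a loop $ii$ contributes $c_{ii}$). Every vertex of $\{1,\ldots,n\}$ belongs to exactly one component of $\vec G$. *)

From HB Require Import structures.
From mathcomp Require Import all_boot all_order all_algebra.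
From mathcomp Require Import boolp.
Set Implicit Arguments. Unset Strict Implicit. Unset Printing Implicit Defensive.
Import GRing.Theory.

(* A directed graph on the vertex set {1..n} (= 'I_n) is its set of directed
   edges E : {set 'I_n * 'I_n}; (i,j) \in E is the edge ij, (i,i) a loop. *)
Section DiGraph.
Variable n : nat.
Implicit Types (E : {set 'I_n * 'I_n}) (S : {set 'I_n}).

Definition und_rel E : rel 'I_n := fun x y => ((x, y) \in E) || ((y, x) \in E).

Definition comp E (x : 'I_n) : {set 'I_n} := [set y | connect (und_rel E) x y].

Definition edges_in E S : {set 'I_n * 'I_n} := [set e in E | (e.1 \in S) && (e.2 \in S)].

(* S (with the edges of E inside it) is a directed path v0 -> v1 -> ... -> vk,
   k >= 0 (k = 0: an isolated vertex without loop) *)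
Definition is_dpath E S : Prop :=
  exists s : seq 'I_n, [/\ uniq s, s != [::], [set x in s] = S &
    edges_in E S = [set e in zip s (behead s)]].

(* S is a directed cycle v0 -> v1 -> ... -> vk -> v0, k >= 0 (k = 0: a loop) *)
Definition is_dcycle E S : Prop :=
  exists s : seq 'I_n, [/\ uniq s, s != [::], [set x in s] = S &
    edges_in E S = [set e in zip s (rot 1 s)]].

Definition path_cycles_graph E : Prop :=
  exists x0 : 'I_n, is_dpath E (comp E x0) /\
    forall x : 'I_n, comp E x != comp E x0 -> is_dcycle E (comp E x).

Definition num_cycles E : nat :=
  #|[set comp E x | x : 'I_n & `[< is_dcycle E (comp E x) >]]|.
End DiGraph.

From Pilot Require Import Defs.
From HB Require Import structures.
From mathcomp Require Import all_boot all_order all_algebra.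
From mathcomp Require Import boolp.
From mathcomp Require Import perm fingroup.
Import GRing.Theory.

(* Expanding every row of E - C as (row of ones) + (row of -C)
   writes det(E - C) as a sum of determinants indexed by the set of rows
   taken from -C.  Two rows of ones kill a determinant, so only det(-C) and
   the n terms with a single row k of ones survive; the k-th one equals
   the sum over permutations s of sgn(s) times the product of the -C i (s i)
   for i <> k.  Deleting the edge out of k from the functional graph of s
   turns the cycle of s through k into a path ending at k and leaves the
   other cycles of s intact; this is a bijection from pairs (k, s) onto the
   graphs of the theorem, and the sign sgn(s) (-1)^(n-1) equals
   (-1)^(number of cycles of the graph). *)

Local Notation comp := Defs.comp.

Section CycleEdges.
Variable T : eqType.
Implicit Types (s p : seq T) (x a b : T).

Lemma mem_map_graph (f : T -> T) s a b :
  ((a, b) \in [seq (c, f c) | c <- s]) = (a \in s) && (b == f a).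
Proof.
apply/mapP/andP => [[c cs [-> ->]] | [as_ /eqP ->]]; first by rewrite cs eqxx.
by exists a.
Qed.

Lemma zip_rot_next s : uniq s -> zip s (rot 1 s) = [seq (a, next s a) | a <- s].
Proof.
case: s => [//|x p] us; rewrite rot1_cons.
apply: (@eq_from_nth _ (x, x)) => [|i].
  by rewrite size_zip size_rcons size_map /= minnn.
rewrite size_zip size_rcons => ilt; rewrite /= minnn in ilt.
rewrite nth_zip ?size_rcons // (nth_map x) //; rewrite next_nth mem_nth // index_uniq //.
rewrite nth_rcons; case: ltnP => // ge; case: eqP => [ei | ne].
  by rewrite [nth x p i]nth_default ?ei.
by move: ilt; rewrite ltnS leq_eqVlt ltnNge ge orbF => /eqP.
Qed.

Lemma mem_zip_rot s a b : uniq s ->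
  ((a, b) \in zip s (rot 1 s)) = (a \in s) && (b == next s a).
Proof. by move=> us; rewrite zip_rot_next // mem_map_graph. Qed.

Lemma zip_rot_cons x p :
  zip (x :: p) (rot 1 (x :: p)) = rcons (zip (x :: p) p) (last x p, x).
Proof.
rewrite rot1_cons lastI zip_rcons ?size_rcons ?size_belast //.
by rewrite -[rcons (belast x p) _]cats1 -[X in zip (_ ++ _) X]cats0 zip_cat ?size_belast // cats0.
Qed.

Lemma next_last x p : uniq (x :: p) -> next (x :: p) (last x p) = x.
Proof. by move=> u; rewrite next_nth mem_last index_last // nth_default. Qed.

Lemma mem_zip_behead x p a b : uniq (x :: p) ->
  ((a, b) \in zip (x :: p) p) =
  [&& a \in x :: p, a != last x p & b == next (x :: p) a].
Proof.
move=> u; have := zip_uniql (rot 1 (x :: p)) u.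
rewrite zip_rot_cons rcons_uniq => /andP [last_notin _].
have -> : ((a, b) \in zip (x :: p) p) =
    ((a, b) \in zip (x :: p) (rot 1 (x :: p))) && ((a, b) != (last x p, x)).
  rewrite zip_rot_cons mem_rcons inE.
  by case: eqP => [[-> ->] | _] /=; rewrite ?(negbTE last_notin) ?andbT.
rewrite mem_zip_rot // xpair_eqE.
have [-> | _] := eqVneq b (next (x :: p) a); last by rewrite !andbF.
have [-> | _] := eqVneq a (last x p); first by rewrite next_last // eqxx !andbF.
by case: (a \in x :: p).
Qed.
End CycleEdges.

Section TrajectEdges.
Variables (T : eqType) (f : T -> T).

Lemma zip_traject y m :
  zip (traject f y m) (traject f (f y) m) = [seq (a, f a) | a <- traject f y m].
Proof. by elim: m y => [//|m IH] y; rewrite !trajectS /= IH. Qed.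

Lemma zip_traject_behead y m :
  zip (traject f y m.+1) (traject f (f y) m) = [seq (a, f a) | a <- traject f y m].
Proof.
by elim: m y => [//|m IH] y; rewrite trajectS [traject _ (f y) _]trajectS /= -IH.
Qed.

Lemma zip_traject_rot y m : iter m f y = y ->
  zip (traject f y m) (rot 1 (traject f y m)) = [seq (a, f a) | a <- traject f y m].
Proof.
case: m => [//|m] fixy; rewrite -zip_traject; congr zip.
by rewrite trajectS rot1_cons trajectSr -iterSr fixy.
Qed.
End TrajectEdges.

Section Components.
Variable n : nat.
Implicit Types (E : {set 'I_n * 'I_n}) (S : {set 'I_n}).

Lemma und_rel_sym E : symmetric (und_rel E).
Proof. by move=> x y; rewrite /und_rel orbC. Qed.

Lemma comp_refl E x : x \in comp E x.
Proof. by rewrite inE connect0. Qed.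

Lemma comp_of_mem E x y : y \in comp E x -> comp E y = comp E x.
Proof.
rewrite inE => cxy; apply/setP => z; rewrite !inE.
apply/idP/idP => [|cxz]; first exact: connect_trans.
by apply: connect_trans cxz; rewrite (sym_connect_sym (@und_rel_sym E)).
Qed.

Lemma edge_in_comp E a b : (a, b) \in E -> b \in comp E a.
Proof. by move=> ab; rewrite inE connect1 // /und_rel ab. Qed.

Lemma edges_inE E S a b :
  ((a, b) \in edges_in E S) = [&& (a, b) \in E, a \in S & b \in S].
Proof. by rewrite inE. Qed.

Lemma edges_in_comp E a b : (a, b) \in E -> (a, b) \in edges_in E (comp E a).
Proof. by move=> ab; rewrite edges_inE ab comp_refl edge_in_comp. Qed.

(* A path on m vertices has m - 1 edges, a cycle has m. *)
Lemma dpath_not_dcycle E S : is_dpath E S -> ~ is_dcycle E S.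
Proof.
case=> p [up p0 pS pE] [c [uc c0 cS cE]].
have card_path : #|edges_in E S| = (size p).-1.
  rewrite pE cardsE (card_uniqP _) ?size_zip ?size_behead ?zip_uniql //.
  exact/minn_idPr/leq_pred.
have card_cycle : #|edges_in E S| = size c.
  by rewrite cE cardsE (card_uniqP _) ?size_zip ?size_rot ?minnn ?zip_uniql.
have size_pc : size p = size c.
  by rewrite -(card_uniqP up) -(card_uniqP uc) -[#|p|]cardsE -[#|c|]cardsE pS cS.
move: p0 card_path; rewrite card_cycle -size_pc -size_eq0.
by case: (size p) => // m _ /esym/n_Sn.
Qed.
End Components.

Arguments comp_refl {n}.
Arguments edge_in_comp {n E a b}.
Arguments edges_in_comp {n E a b}.
Arguments comp_of_mem {n E x y}.

Section PermOrbits.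
Variables (T : finType) (s : {perm T}).

Lemma porbit_perm_apply a : porbit s (s a) = porbit s a.
Proof. by have := porbit_perm s 1 a; rewrite expg1. Qed.

Lemma perm_mem_porbit a : s a \in porbit s a.
Proof. by rewrite -porbit_perm_apply porbit_id. Qed.
End PermOrbits.

Section CutGraph.
Variable n : nat.

Definition cut_graph (p : 'I_n * {perm 'I_n}) : {set 'I_n * 'I_n} :=
  [set (i, p.2 i) | i in [pred i | i != p.1]].

Lemma mem_cut_graph k (s : {perm 'I_n}) a b :
  ((a, b) \in cut_graph (k, s)) = (a != k) && (b == s a).
Proof.
apply/imsetP/andP => [[i ik [-> ->]] | [ak /eqP ->]]; first by rewrite eqxx.
by exists a.
Qed.

Lemma cut_graph_inj : injective cut_graph.
Proof.
move=> [k s] [k' s'] eq_cut.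
have <- : k = k'.
  apply/eqP; apply: contraT => kk'.
  have : (k, s' k) \in cut_graph (k', s') by rewrite mem_cut_graph kk' eqxx.
  by rewrite -eq_cut mem_cut_graph eqxx.
have eq_s a : a != k -> s a = s' a.
  move=> ak; have : (a, s a) \in cut_graph (k, s) by rewrite mem_cut_graph ak eqxx.
  by rewrite eq_cut mem_cut_graph => /andP [_ /eqP].
congr pair; apply/permP => a.
have [-> | ak] := eqVneq a k; last exact: eq_s.
(* s and s' agree off k, so both send k to the one point they miss there. *)
apply: contraTeq isT => ne.
pose b := (s'^-1)%g (s k).
have s'b : s' b = s k by rewrite permKV.
have bk : b != k by apply: contraNneq ne => bk; rewrite -s'b bk.
by move: (eq_s b bk); rewrite s'b => /perm_inj bk'; rewrite bk' eqxx in bk.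
Qed.

Lemma cut_graph_of_partial_perm (E : {set 'I_n * 'I_n}) (k h : 'I_n) :
    (forall a b b', (a, b) \in E -> (a, b') \in E -> b = b') ->
    (forall a a' b, (a, b) \in E -> (a', b) \in E -> a = a') ->
    (forall b, (k, b) \notin E) -> (forall a, (a, h) \notin E) ->
    (forall a, a != k -> exists b, (a, b) \in E) ->
  exists s : {perm 'I_n}, E = cut_graph (k, s).
Proof.
move=> out_uniq in_uniq k_out h_in out_ex.
pose g a := odflt h [pick b | (a, b) \in E].
have gE a : a != k -> (a, g a) \in E.
  move=> ak; rewrite /g; case: pickP => [b //|no_out].
  by have [b ab] := out_ex a ak; rewrite no_out in ab.
have gk : g k = h by rewrite /g; case: pickP => [b kb|//]; move: (k_out b); rewrite kb.
have g_inj : injective g.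
  move=> a a' ga.
  have [ak | ak] := eqVneq a k; have [a'k | a'k] := eqVneq a' k.
  - by rewrite ak a'k.
  - by move: (gE a' a'k); rewrite -ga ak gk (negbTE (h_in a')).
  - by move: (gE a ak); rewrite ga a'k gk (negbTE (h_in a)).
  - by apply: in_uniq (gE a ak) _; rewrite ga gE.
exists (perm g_inj); apply/setP => [[a b]]; rewrite mem_cut_graph permE.
apply/idP/andP => [ab | [ak /eqP ->]]; last exact: gE.
have ak : a != k by apply: contraTneq ab => ->.
by split=> //; apply/eqP; apply: out_uniq ab (gE a ak).
Qed.

Section OneCutGraph.
Variables (k : 'I_n) (s : {perm 'I_n}).
Local Notation E := (cut_graph (k, s)).

Lemma connect_cut_iter m z : (forall t, t < m -> iter t s z != k) ->
  connect (und_rel E) z (iter m s z).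
Proof.
elim: m => [|m IH] iter_k; first exact: connect0.
apply: connect_trans (IH (fun t lt => iter_k t (ltnW lt))) _.
by apply: connect1; rewrite /und_rel mem_cut_graph iter_k // eqxx.
Qed.

Lemma connect_cut_to_k z : k \in porbit s z -> connect (und_rel E) z k.
Proof.
case/porbitP => i; rewrite permX => ki.
have [|m /eqP mk m_min] := ex_minnP (_ : exists m, iter m s z == k).
  by exists i; rewrite -ki.
suff : connect (und_rel E) z (iter m s z) by rewrite mk.
apply: connect_cut_iter => t lt.
by apply/negP => /m_min; rewrite leqNgt lt.
Qed.

Lemma comp_cut_graph x : comp E x = porbit s x.
Proof.
apply/setP => y; rewrite inE; apply/idP/idP.
  case/connectP => p; elim: p x => [|z p IH] x /=; first by move=> _ ->; exact: porbit_id.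
  case/andP => xz pz ly; have zx : z \in porbit s x.
    move: xz; rewrite /und_rel !mem_cut_graph.
    case/orP => /andP [_ /eqP ->]; first exact: perm_mem_porbit.
    by rewrite porbit_sym perm_mem_porbit.
  by rewrite -(eqP (_ : porbit s z == porbit s x)) ?eq_porbit_mem // IH.
move=> yx; have [kx | kx] := boolP (k \in porbit s x).
  have ky : k \in porbit s y by rewrite (eqP (_ : porbit s y == porbit s x)) ?eq_porbit_mem.
  apply: (connect_trans (connect_cut_to_k x kx)).
  by rewrite (sym_connect_sym (@und_rel_sym _ E)) connect_cut_to_k.
case/porbitP: yx => i; rewrite permX => ->.
apply: connect_cut_iter => t _; apply: contraNneq kx => <-.
by rewrite -permX mem_porbit.
Qed.

Lemma edges_in_cut_graph x a b : ((a, b) \in edges_in E (porbit s x)) =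
  [&& a \in porbit s x, a != k & b == s a].
Proof.
rewrite edges_inE mem_cut_graph.
have [ax | //] := boolP (a \in porbit s x); rewrite ?andbF //=.
case: eqVneq => //= _; case: eqP => //= ->.
by rewrite -(eqP (_ : porbit s a == porbit s x)) ?eq_porbit_mem ?perm_mem_porbit.
Qed.

Lemma cut_graph_dcycle x : k \notin porbit s x -> is_dcycle E (comp E x).
Proof.
move=> kx; rewrite comp_cut_graph.
exists (traject s x #|porbit s x|); split.
- exact: uniq_traject_porbit.
- by rewrite -size_eq0 size_traject card_porbit_neq0.
- by apply/setP => y; rewrite inE porbit_traject.
apply/setP => [[a b]]; rewrite edges_in_cut_graph inE.
rewrite zip_traject_rot ?iter_porbit // mem_map_graph -porbit_traject.
have [ax | //] := boolP (a \in porbit s x).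
by rewrite (_ : a != k) //; apply: contraNneq kx => <-.
Qed.

Lemma cut_graph_dpath : is_dpath E (comp E k).
Proof.
rewrite comp_cut_graph.
have card_sk : #|porbit s (s k)| = #|porbit s k| by rewrite porbit_perm_apply.
move: (card_porbit_neq0 s k); case eN: #|porbit s k| => [//|N] _.
have traj_k : traject s (s k) N.+1 = rcons (traject s (s k) N) k.
  by rewrite trajectSr -iterSr -eN iter_porbit.
have mem_traj a : (a \in porbit s k) = (a \in traject s (s k) N.+1).
  by rewrite -eN -card_sk -porbit_traject porbit_perm_apply.
have uniq_traj := uniq_traject_porbit s (s k); rewrite card_sk eN in uniq_traj.
exists (traject s (s k) N.+1); split => //.
  by apply/setP => y; rewrite inE mem_traj.
apply/setP => [[a b]]; rewrite edges_in_cut_graph inE trajectS /= -trajectS.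
rewrite zip_traject_behead mem_map_graph mem_traj traj_k mem_rcons inE.
move: uniq_traj; rewrite traj_k rcons_uniq => /andP [k_notin _].
by have [-> | //] := eqVneq a k; rewrite (negbTE k_notin).
Qed.

Lemma cut_graph_path_cycles : path_cycles_graph E.
Proof.
exists k; split=> [|x]; first exact: cut_graph_dpath.
rewrite !comp_cut_graph eq_sym eq_porbit_mem => kx.
by have := cut_graph_dcycle x kx; rewrite comp_cut_graph.
Qed.

Lemma num_cycles_cut_graph : num_cycles E = #|porbits s| - 1.
Proof.
rewrite /num_cycles.
have -> : [set comp E x | x : 'I_n & `[< is_dcycle E (comp E x) >]] =
    porbits s :\ porbit s k.
  apply/setP => S; rewrite !inE; apply/imsetP/andP.
    case=> x; rewrite inE => /asboolP dcyc ->; rewrite comp_cut_graph.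
    split; last exact: imset_f.
    apply/eqP => kx; move: dcyc; rewrite comp_cut_graph kx -comp_cut_graph.
    exact: dpath_not_dcycle cut_graph_dpath.
  case=> Sk /imsetP [x _ Sx]; exists x; last by rewrite comp_cut_graph.
  rewrite inE; apply/asboolP; apply: cut_graph_dcycle.
  by rewrite -eq_porbit_mem eq_sym -Sx.
by rewrite [#|porbits s|](cardsD1 (porbit s k)) imset_f // addKn.
Qed.
End OneCutGraph.

Section PathCyclesGraph.
Context {E : {set 'I_n * 'I_n}} {x0 h : 'I_n} {p : seq 'I_n}.
Hypotheses (uniq_path : uniq (h :: p)) (path_comp : [set x in h :: p] = comp E x0)
  (path_edges : edges_in E (comp E x0) = [set e in zip (h :: p) p])
  (cycle_comps : forall x, comp E x != comp E x0 -> is_dcycle E (comp E x)).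
Local Notation k := (last h p).

Lemma mem_path_comp a : (a \in comp E x0) = (a \in h :: p).
Proof. by rewrite -path_comp inE. Qed.

Lemma comp_edges_next a : exists c : seq 'I_n, [/\ uniq c, a \in c &
  forall u v, (u, v) \in edges_in E (comp E a) -> v = next c u].
Proof.
have [ax0 | ax0] := eqVneq (comp E a) (comp E x0).
  exists (h :: p); split=> // [|u v]; first by rewrite -mem_path_comp -ax0 comp_refl.
  by rewrite ax0 path_edges inE mem_zip_behead // => /and3P [_ _ /eqP].
have [c [uc _ cS cE]] := cycle_comps a ax0.
exists c; split=> // [|u v]; first by have := comp_refl E a; rewrite -cS inE.
by rewrite cE inE mem_zip_rot // => /andP [_ /eqP].
Qed.

Lemma out_edge_uniq a b b' : (a, b) \in E -> (a, b') \in E -> b = b'.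
Proof.
move=> ab ab'; have [c [_ _ cE]] := comp_edges_next a.
by rewrite (cE _ _ (edges_in_comp ab)) (cE _ _ (edges_in_comp ab')).
Qed.

Lemma in_edge_uniq a a' b : (a, b) \in E -> (a', b) \in E -> a = a'.
Proof.
move=> ab a'b; have [c [uc _ cE]] := comp_edges_next a.
have a'b_in : (a', b) \in edges_in E (comp E a).
  by rewrite -(comp_of_mem (edge_in_comp ab)) (comp_of_mem (edge_in_comp a'b)) edges_in_comp.
apply: (can_inj (prev_next uc)).
by rewrite -(cE _ _ (edges_in_comp ab)) -(cE _ _ a'b_in).
Qed.

Lemma last_no_out_edge b : (k, b) \notin E.
Proof.
apply/negP => /edges_in_comp.
rewrite (@comp_of_mem _ _ x0) ?mem_path_comp ?mem_last //.
by rewrite path_edges inE mem_zip_behead // eqxx andbF.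
Qed.

Lemma head_no_in_edge a : (a, h) \notin E.
Proof.
apply/negP => ah; have := edges_in_comp ah.
rewrite -(comp_of_mem (edge_in_comp ah)) (@comp_of_mem _ _ x0) ?mem_path_comp ?mem_head //.
rewrite path_edges inE mem_zip_behead // => /and3P [_ ak /eqP h_next].
have : next (h :: p) a = next (h :: p) k by rewrite next_last.
by move/(can_inj (prev_next uniq_path))/eqP; rewrite (negbTE ak).
Qed.

Lemma out_edge_exists a : a != k -> exists b, (a, b) \in E.
Proof.
move=> ak; have [ax0 | ax0] := eqVneq (comp E a) (comp E x0).
  exists (next (h :: p) a).
  have : (a, next (h :: p) a) \in edges_in E (comp E x0).
    by rewrite path_edges inE mem_zip_behead // -mem_path_comp -ax0 comp_refl ak eqxx.
  by rewrite edges_inE => /andP [].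
have [c [uc _ cS cE]] := cycle_comps a ax0.
exists (next c a).
have : (a, next c a) \in edges_in E (comp E a).
  by rewrite cE inE mem_zip_rot // eqxx andbT; have := comp_refl E a; rewrite -cS inE.
by rewrite edges_inE => /andP [].
Qed.
End PathCyclesGraph.

Lemma path_cycles_graphP (E : {set 'I_n * 'I_n}) :
  path_cycles_graph E -> exists p, E = cut_graph p.
Proof.
case=> x0 [[[|h p] [uniq_path _ path_comp path_edges]] cycle_comps] //.
have [s ->] := cut_graph_of_partial_perm _ _ _
  (out_edge_uniq uniq_path path_comp path_edges cycle_comps)
  (in_edge_uniq uniq_path path_comp path_edges cycle_comps)
  (last_no_out_edge uniq_path path_comp path_edges)
  (head_no_in_edge uniq_path path_comp path_edges)
  (out_edge_exists uniq_path path_comp path_edges cycle_comps).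
by exists (last h p, s).
Qed.

Lemma path_cycles_graphE (E : {set 'I_n * 'I_n}) :
  `[< path_cycles_graph E >] = (E \in [set cut_graph p | p : 'I_n * {perm 'I_n}]).
Proof.
apply/asboolP/imsetP => [/path_cycles_graphP [p ->] | [[k s] _ ->]].
  by exists p.
exact: cut_graph_path_cycles.
Qed.
End CutGraph.

Arguments cut_graph {n}.

Local Open Scope ring_scope.

Lemma prod_cut_graph (R : comPzRingType) n (F : 'I_n -> 'I_n -> R) k
    (s : {perm 'I_n}) :
  \prod_(e in cut_graph (k, s)) F e.1 e.2 = \prod_(i | i != k) F i (s i).
Proof. by rewrite big_imset //= => i j _ _ []. Qed.

Lemma sign_perm_porbits (R : pzRingType) n (s : 'S_n) : (0 < n)%N ->
  (-1) ^+ s * (-1) ^+ n.-1 = (-1) ^+ (#|porbits s| - 1) :> R.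
Proof.
move=> n_gt0; have : (0 < #|porbits s|)%N.
  by apply/card_gt0P; exists (porbit s (Ordinal n_gt0)); apply: imset_f.
rewrite /odd_perm signr_addb card_ord !signr_odd -!exprD -signr_odd -[RHS]signr_odd.
case: n n_gt0 s => // m _ s; case: #|porbits s| => // q _.
by rewrite subn1 /= !oddD /=; case: (odd m); case: (odd q).
Qed.

Lemma sum_setT_setC1 (T : finType) (V : nmodType) (f : {set T} -> V) :
    (forall (J : {set T}) (x y : T), x != y -> x \notin J -> y \notin J -> f J = 0) ->
  \sum_(J : {set T}) f J = f setT + \sum_(x : T) f (~: [set x]).
Proof.
move=> f_eq0; rewrite (bigD1 setT) //=; congr (_ + _).
have setC1_inj : injective (fun x : T => ~: [set x]) by move=> x y /setC_inj/set1_inj.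
rewrite -(big_imset f (in2W setC1_inj)) /= big_mkcond [RHS]big_mkcond /=.
apply: eq_bigr => J _.
have [/imsetP [x _ eJ] | notC1] := boolP (J \in [set [set~ x] | x in xpredT]).
  by rewrite ifT // eJ; apply/eqP => /setP/(_ x); rewrite !inE eqxx.
have [-> // | JT] := eqVneq J setT.
have /subsetPn [x _ xJ] : ~~ (setT \subset J) by rewrite subTset.
have /subsetPn [y] : ~~ ([set~ x] \subset J).
  apply: contra notC1 => sub; apply/imsetP; exists x => //.
  apply/eqP; rewrite eqEsubset sub andbT; apply/subsetP => i iJ.
  by rewrite !inE; apply: contraNneq xJ => <-.
by rewrite !inE => yx yJ; apply: (f_eq0 J y x).
Qed.

Section DetExpansion.
Variables (R : comPzRingType) (n : nat).
Implicit Types (A B C : 'M[R]_n) (J : {set 'I_n}).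

Definition row_mix J A B : 'M[R]_n := \matrix_(i, j) if i \in J then A i j else B i j.

Lemma det_add_row_mix A B : \det (A + B) = \sum_J \det (row_mix J A B).
Proof.
rewrite /determinant.
transitivity (\sum_(s : 'S_n) (-1) ^+ s *
    \sum_(J : {set 'I_n}) \prod_i (if i \in J then A i (s i) else B i (s i))).
  apply: eq_bigr => s _; rewrite -bigA_distr; congr (_ * _).
  by apply: eq_bigr => i _; rewrite mxE.
rewrite exchange_big /=; apply: eq_bigr => J _; rewrite big_distrr /=.
by apply: eq_bigr => s _; congr (_ * _); apply: eq_bigr => i _; rewrite mxE.
Qed.

Lemma det_row_mix_const_eq0 A c J x y : x != y -> x \notin J -> y \notin J ->
  \det (row_mix J A (const_mx c)) = 0.
Proof.
move=> xy xJ yJ; apply: (determinant_alternate xy) => j.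
by rewrite !mxE (negbTE xJ) (negbTE yJ).
Qed.

Lemma det_row_mix_setC1 A k : \det (row_mix (~: [set k]) A (const_mx 1)) =
  \sum_(s : 'S_n) (-1) ^+ s * \prod_(i | i != k) A i (s i).
Proof.
apply: eq_bigr => s _; congr (_ * _); rewrite [RHS]big_mkcond /=.
by apply: eq_bigr => i _; rewrite !mxE !inE.
Qed.
End DetExpansion.

Lemma det_const1_sub (R : comPzRingType) n (C : 'M[R]_n) :
  \det (const_mx 1 - C) = \det (- C) +
    \sum_(k : 'I_n) \sum_(s : 'S_n) (-1) ^+ s * \prod_(i | i != k) - C i (s i).
Proof.
rewrite addrC det_add_row_mix sum_setT_setC1 => [|J x y]; last exact: det_row_mix_const_eq0.
congr (\det _ + _); first by apply/matrixP => i j; rewrite !mxE inE.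
apply: eq_bigr => k _; rewrite det_row_mix_setC1.
by apply: eq_bigr => s _; congr (_ * _); apply: eq_bigr => i _; rewrite mxE.
Qed.

Theorem corollaryA5 (R : comPzRingType) (n : nat) (C : 'M[R]_n) :
  \det (const_mx 1 - C) =
  \det (- C) +
  \sum_(E : {set 'I_n * 'I_n} | `[< path_cycles_graph E >])
     (-1) ^+ num_cycles E * \prod_(e in E) C e.1 e.2.
Proof.
rewrite det_const1_sub; congr (_ + _).
rewrite (eq_bigl _ _ (@path_cycles_graphE n)) big_imset => [|p q _ _]; last exact: cut_graph_inj.
rewrite pair_big /=; apply: eq_big => [//|[k s] _] /=.
rewrite num_cycles_cut_graph prod_cut_graph prodrN cardC1 card_ord mulrA.
by rewrite sign_perm_porbits // (leq_ltn_trans _ (ltn_ord k)).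
Qed.
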